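(* Let $A,B:(0,\infty)\to(0,\infty)$ be the functions $A=\tfrac r3\sqrt{1-r^{-3}}$, $B=\tfrac r{\sqrt3}$, where $r=r(t)\in(1,\infty)$ is determined by $\dot A=\tfrac12(1-A^2/B^2)$, $\dot B=A/B$ with $r\to1$ as $t\to0$. Consider the ODE system $$\dot f_+=\frac{f_+}{A}\Bigl(1-\frac{A^2}{B^2}-f_+\Bigr)+f_-^2\frac{A}{B^2},\qquad \dot f_-=\frac{2f_-}{A}(f_+-1).$$ If a solution $(f_+,f_-)$ lies in $\mathcal{R}_\infty=\{f_+>1,\ f_->1\}$ at some time $t_0>0$, then it cannot be uniformly bounded for all $t\ge t_0$.
   Context: $A$ and $B$ are the metric coefficients of the Bryant–Salamon $G_2$-metric on $\mathbf{S}(S^3)$, and the system is the $\mathrm{SU}(2)^3$-invariant $G_2$-instanton equation for $\mathrm{SU}(2)$-connections $f_+\sum_iE_i\otimes e_i^++f_-\sum_iE_i\otimes e_i^-$. ''Cannot be uniformly bounded for all $t\ge t_0$'' includes the possibility of blow-up in finite time. *)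

From Stdlib Require Import Reals Lra.
From Coquelicot Require Import Coquelicot.
Open Scope R_scope.

Definition BS_A (r : R -> R) (t : R) : R := r t / 3 * sqrt (1 - / (r t ^ 3)).
Definition BS_B (r : R -> R) (t : R) : R := r t / sqrt 3.

Definition BS_radial (r : R -> R) : Prop :=
  (forall t, 0 < t -> 1 < r t) /\
  (forall t, 0 < t ->
     is_derive (BS_A r) t (/2 * (1 - (BS_A r t)^2 / (BS_B r t)^2))) /\
  (forall t, 0 < t -> is_derive (BS_B r) t (BS_A r t / BS_B r t)) /\
  filterlim r (at_right 0) (locally 1).

Definition instanton_solution (r : R -> R) (t0 : R) (fp fm : R -> R) : Prop :=
  (forall t, t0 < t ->
     is_derive fp t (fp t / BS_A r t * (1 - (BS_A r t)^2 / (BS_B r t)^2 - fp t)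
                     + (fm t)^2 * (BS_A r t / (BS_B r t)^2)) /\
     is_derive fm t (2 * fm t / BS_A r t * (fp t - 1))) /\
  filterlim fp (at_right t0) (locally (fp t0)) /\
  filterlim fm (at_right t0) (locally (fm t0)).

From Stdlib Require Import Reals Lra Classical.
From Coquelicot Require Import Coquelicot.
Open Scope R_scope.

(* Since B' = A/B > 0, r increases, so A^2/B^2 = (1 - r^-3)/3 stays above its
   value q0 > 0 at t0, while A' <= 1/2 makes A grow at most linearly.  The
   slightly shrunken quadrant {f+ > 1 + d, f- > c} with 1 < c < f-(t0) and d small
   is entered transversally through both of its faces, so the solution never
   leaves it.  There f-' >= 2d/A >= 4d/(t - t0 + 2 A(t0)), and integrating this
   lower bound makes f- grow like a logarithm, so it cannot stay bounded. *)

Lemma locally_Rabs (a : R) (P : R -> Prop) :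
  locally a P -> exists d, 0 < d /\ forall x, Rabs (x - a) < d -> P x.
Proof.
intros [d Hd]. exists d. split; [apply cond_pos|]. intros x Hx. now apply Hd.
Qed.

Lemma filterlim_gt {T : Type} {F : (T -> Prop) -> Prop} {FF : Filter F}
  (f : T -> R) (l c : R) :
  filterlim f F (locally l) -> c < l -> F (fun x => c < f x).
Proof. intros Hf Hc. apply Hf. now apply open_gt. Qed.

Lemma filterlim_lt {T : Type} {F : (T -> Prop) -> Prop} {FF : Filter F}
  (f : T -> R) (l c : R) :
  filterlim f F (locally l) -> l < c -> F (fun x => f x < c).
Proof. intros Hf Hc. apply (Hf (fun y => y < c)). now apply open_lt. Qed.

Lemma at_left_of_locally (m : R) (P : R -> Prop) : locally m P -> at_left m P.
Proof. unfold at_left, within. apply filter_imp. auto. Qed.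

Lemma is_derive_continuous (f : R -> R) (x l : R) : is_derive f x l -> continuous f x.
Proof. intro H. exact (ex_derive_continuous f x (ex_intro _ l H)). Qed.

Lemma is_derive_pos_at_left (f : R -> R) (m l : R) :
  is_derive f m l -> 0 < l -> at_left m (fun x => f x < f m).
Proof.
intros Hf Hl. apply is_derive_Reals in Hf. destruct (Hf (l / 2) ltac:(lra)) as [d Hd].
exists d. intros x Hx Hxm. change R in x. change (Rabs (x - m) < d) in Hx.
specialize (Hd (x - m) ltac:(lra) Hx). replace (m + (x - m)) with x in Hd by ring.
apply Rabs_def2 in Hd.
assert (Hq : 0 < (f x - f m) / (x - m)) by lra.
assert (Hneg : 0 < / (m - x)) by (apply Rinv_0_lt_compat; lra).
replace ((f x - f m) / (x - m)) with ((f m - f x) * / (m - x)) in Hq by (field; lra).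
nra.
Qed.

Lemma nondecreasing_of_derive_nonneg (f df : R -> R) (a b : R) : a <= b ->
  (forall x, a <= x <= b -> is_derive f x (df x)) ->
  (forall x, a <= x <= b -> 0 <= df x) -> f a <= f b.
Proof.
intros Hab Hf Hdf. destruct (MVT_gen f a b df) as [c [Hc Hmvt]];
  rewrite ?Rmin_left, ?Rmax_right in * by lra.
- intros x Hx. apply Hf; lra.
- intros x Hx. apply continuity_pt_filterlim, (is_derive_continuous f x (df x)), Hf; lra.
- specialize (Hdf c Hc). nra.
Qed.

Lemma le_of_at_left (f : R -> R) (m c : R) :
  continuous f m -> at_left m (fun x => c < f x) -> c <= f m.
Proof.
intros Hf Hleft. apply Rnot_lt_le. intro Hlt.
destruct (Hierarchy.filter_ex _
  (filter_and _ _ Hleft (at_left_of_locally _ _ (filterlim_lt f (f m) c Hf Hlt))))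
  as [x [H1 H2]].
lra.
Qed.

Lemma lt_of_at_left (f : R -> R) (m c l : R) : is_derive f m l ->
  (f m = c -> 0 < l) -> at_left m (fun x => c < f x) -> c < f m.
Proof.
intros Hf Hl Hleft.
destruct (Rle_lt_or_eq_dec _ _ (le_of_at_left f m c (is_derive_continuous f m l Hf) Hleft))
  as [Hlt | Heq]; [exact Hlt|].
destruct (Hierarchy.filter_ex _
  (filter_and _ _ Hleft (is_derive_pos_at_left f m l Hf (Hl (eq_sym Heq)))))
  as [x [H1 H2]].
lra.
Qed.

Section InvariantQuadrant.

Variables (u v du dv : R -> R) (t0 c1 c2 : R).
Hypotheses (Hu0 : c1 < u t0) (Hv0 : c2 < v t0)
  (Hu_right : filterlim u (at_right t0) (locally (u t0)))
  (Hv_right : filterlim v (at_right t0) (locally (v t0)))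
  (Hder : forall t, t0 < t -> is_derive u t (du t) /\ is_derive v t (dv t))
  (Hu_face : forall t, t0 < t -> u t = c1 -> c2 <= v t -> 0 < du t)
  (Hv_face : forall t, t0 < t -> v t = c2 -> c1 <= u t -> 0 < dv t).

Let inside (t : R) : Prop := c1 < u t /\ c2 < v t.

Let inside_upto (s : R) : Prop := forall x, t0 <= x <= s -> inside x.

Lemma inside_upto_extend (m : R) : t0 <= m ->
  (forall x, t0 <= x < m -> inside x) -> locally m (fun x => m <= x -> inside x) ->
  exists s, m < s /\ inside_upto s.
Proof.
intros Hm Hbelow Hnear. destruct (locally_Rabs m _ Hnear) as [d [Hd Hd']].
exists (m + d / 2). split; [lra|]. intros x Hx.
destruct (Rlt_le_dec x m); [apply Hbelow; lra|].
apply Hd'; [rewrite Rabs_pos_eq|]; lra.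
Qed.

Lemma inside_near (m : R) : t0 < m -> inside m -> locally m inside.
Proof.
intros Hm [Hu Hv]. destruct (Hder m Hm) as [Hdu Hdv].
apply filter_and.
- exact (filterlim_gt u _ c1 (is_derive_continuous _ _ _ Hdu) Hu).
- exact (filterlim_gt v _ c2 (is_derive_continuous _ _ _ Hdv) Hv).
Qed.

Lemma inside_of_at_left (m : R) : t0 < m -> at_left m inside -> inside m.
Proof.
intros Hm Hleft. destruct (Hder m Hm) as [Hdu Hdv].
assert (Hleft_u : at_left m (fun x => c1 < u x))
  by exact (filter_imp _ _ (fun x H => proj1 H) Hleft).
assert (Hleft_v : at_left m (fun x => c2 < v x))
  by exact (filter_imp _ _ (fun x H => proj2 H) Hleft).
assert (Hu : c1 <= u m)
  by exact (le_of_at_left u m c1 (is_derive_continuous _ _ _ Hdu) Hleft_u).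
assert (Hv : c2 <= v m)
  by exact (le_of_at_left v m c2 (is_derive_continuous _ _ _ Hdv) Hleft_v).
split.
- apply (lt_of_at_left u m c1 (du m) Hdu); [intro He; now apply Hu_face | exact Hleft_u].
- apply (lt_of_at_left v m c2 (dv m) Hdv); [intro He; now apply Hv_face | exact Hleft_v].
Qed.

Lemma quadrant_invariant : forall t, t0 <= t -> c1 < u t /\ c2 < v t.
Proof.
intros t1 Ht1. apply NNPP. intro Hout.
(* m is the last time up to which the solution stays inside: it is inside at m,
   hence slightly beyond, contradicting the maximality of m. *)
set (E := fun s => t0 <= s /\ inside_upto s).
assert (HE_bound : bound E).
{ exists t1. intros s [Hs Hup]. apply Rnot_lt_le. intro Hlt. apply Hout, Hup. lra. }
assert (HE_t0 : E t0).
{ split; [lra|]. intros x Hx. replace x with t0 by lra. now split. }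
destruct (completeness E HE_bound (ex_intro _ t0 HE_t0)) as [m [Hub Hlub]].
assert (Hbelow : forall x, t0 <= x < m -> inside x).
{ intros x Hx. apply NNPP. intro Hn. assert (m <= x); [|lra].
  apply Hlub. intros s [Hs Hup]. apply Rnot_lt_le. intro. apply Hn, Hup. lra. }
assert (Hstart : t0 < m).
{ assert (Hright : at_right t0 inside)
    by exact (filter_and _ _ (filterlim_gt u _ c1 Hu_right Hu0)
                              (filterlim_gt v _ c2 Hv_right Hv0)).
  destruct (inside_upto_extend t0 (Rle_refl t0) (fun x Hx => ltac:(lra))) as [s [Hs Hup]].
  { apply (filter_imp (fun x => t0 < x -> inside x)); [|exact Hright].
    intros x Hx Hle.
    destruct (Rle_lt_or_eq_dec _ _ Hle) as [Hlt | <-]; [now apply Hx | now split]. }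
  assert (HEs : E s) by (split; [lra | exact Hup]). specialize (Hub s HEs). lra. }
assert (Hm : inside m).
{ apply inside_of_at_left; [exact Hstart|]. unfold at_left, within.
  apply (filter_imp (fun x => t0 < x)); [intros x Hx Hxm; apply Hbelow; lra|].
  now apply open_gt. }
destruct (inside_upto_extend m (Rlt_le _ _ Hstart) Hbelow) as [s [Hs Hup]].
{ apply (filter_imp _ _ (fun x H _ => H) (inside_near m Hstart Hm)). }
assert (HEs : E s) by (split; [lra | exact Hup]). specialize (Hub s HEs). lra.
Qed.

End InvariantQuadrant.

Lemma derive_ge_inv_affine_unbounded (g dg : R -> R) (a b k : R) : 0 < b -> 0 < k ->
  (forall x, a < x -> is_derive g x (dg x)) ->
  (forall x, a < x -> k / (x - a + b) <= dg x) ->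
  forall M, exists t, a < t /\ M < g t.
Proof.
intros Hb Hk Hg Hdg M.
assert (Hlog : forall t, a + 1 <= t ->
          g (a + 1) - k * ln (1 + b) <= g t - k * ln (t - a + b)).
{ intros t Ht. replace (1 + b) with (a + 1 - a + b) by ring.
  apply (nondecreasing_of_derive_nonneg (fun x => g x - k * ln (x - a + b))
    (fun x => dg x - k * / (x - a + b))); [lra | |].
  - intros x Hx. apply (is_derive_minus g (fun x => k * ln (x - a + b))); [apply Hg; lra|].
    auto_derive; [lra | field; lra].
  - intros x Hx. specialize (Hdg x ltac:(lra)). unfold Rdiv in Hdg. lra. }
set (T := Rabs (M - g (a + 1)) / k + ln (1 + b) + 1).
assert (HT : ln (1 + b) < T).
{ assert (0 <= Rabs (M - g (a + 1)) / k) by (apply Rdiv_le_0_compat; [apply Rabs_pos | lra]).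
  unfold T. lra. }
assert (HexpT : 1 + b < exp T) by (rewrite <- (exp_ln (1 + b)) by lra; now apply exp_increasing).
exists (a + exp T - b). split; [lra|].
specialize (Hlog (a + exp T - b) ltac:(lra)).
replace (a + exp T - b - a + b) with (exp T) in Hlog by ring. rewrite ln_exp in Hlog.
assert (Habs : M - g (a + 1) <= Rabs (M - g (a + 1))) by apply Rle_abs.
assert (HkT : k * T = Rabs (M - g (a + 1)) + k * ln (1 + b) + k) by (unfold T; field; lra).
lra.
Qed.

Lemma inv_cube_bounds (x : R) : 1 < x -> 0 < / x ^ 3 < 1.
Proof.
intro Hx. assert (H3 : 1 < x ^ 3) by (simpl; nra).
split; [apply Rinv_0_lt_compat; lra|]. rewrite <- Rinv_1. apply Rinv_lt_contravar; lra.
Qed.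

Lemma BS_A_pos (r : R -> R) (t : R) : 1 < r t -> 0 < BS_A r t.
Proof.
intro Hr. pose proof (inv_cube_bounds _ Hr). unfold BS_A.
apply Rmult_lt_0_compat; [lra | apply sqrt_lt_R0; lra].
Qed.

Lemma BS_B_pos (r : R -> R) (t : R) : 0 < r t -> 0 < BS_B r t.
Proof. intro Hr. apply Rdiv_lt_0_compat; [exact Hr | apply sqrt_lt_R0; lra]. Qed.

Lemma BS_ratio (r : R -> R) (t : R) : 1 < r t ->
  BS_A r t ^ 2 / BS_B r t ^ 2 = (1 - / r t ^ 3) / 3.
Proof.
intro Hr. pose proof (inv_cube_bounds _ Hr). unfold BS_A, BS_B, Rdiv.
rewrite !Rpow_mult_distr, !pow_inv, <- !Rsqr_pow2, !Rsqr_sqrt by lra.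
unfold Rsqr. field. lra.
Qed.

Section BryantSalamon.

Variable r : R -> R.
Hypothesis Hr : BS_radial r.

Lemma BS_r_le (s t : R) : 0 < s <= t -> r s <= r t.
Proof.
destruct Hr as [Hr1 [_ [HdB _]]]. intro Hst.
assert (HB : BS_B r s <= BS_B r t).
{ apply (nondecreasing_of_derive_nonneg _ (fun x => BS_A r x / BS_B r x)); [lra | |].
  - intros x Hx. apply HdB. lra.
  - intros x Hx. pose proof (Hr1 x ltac:(lra)).
    apply Rlt_le, Rdiv_lt_0_compat; [apply BS_A_pos | apply BS_B_pos]; lra. }
unfold BS_B, Rdiv in HB. apply Rmult_le_reg_r in HB; [exact HB|].
apply Rinv_0_lt_compat, sqrt_lt_R0. lra.
Qed.

Lemma BS_ratio_ge (s t : R) : 0 < s <= t ->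
  (1 - / r s ^ 3) / 3 <= BS_A r t ^ 2 / BS_B r t ^ 2.
Proof.
intro Hst. destruct Hr as [Hr1 _].
pose proof (Hr1 s ltac:(lra)) as Hs. pose proof (BS_r_le s t Hst) as Hrst.
rewrite BS_ratio by (apply Hr1; lra).
assert (r s ^ 3 <= r t ^ 3) by (apply pow_incr; lra).
assert (/ r t ^ 3 <= / r s ^ 3) by (apply Rinv_le_contravar; [apply pow_lt|]; lra).
lra.
Qed.

Lemma BS_A_le_affine (s t : R) : 0 < s <= t -> BS_A r t <= BS_A r s + (t - s) / 2.
Proof.
destruct Hr as [Hr1 [HdA _]]. intro Hst.
enough (0 - 0 <= BS_A r s + (t - s) / 2 - BS_A r t) by lra.
replace (0 - 0) with (BS_A r s + (s - s) / 2 - BS_A r s) by field.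
apply (nondecreasing_of_derive_nonneg (fun x => BS_A r s + (x - s) / 2 - BS_A r x)
  (fun x => /2 - /2 * (1 - BS_A r x ^ 2 / BS_B r x ^ 2))); [lra | |].
- intros x Hx. apply (is_derive_minus (fun x => BS_A r s + (x - s) / 2)); [|apply HdA; lra].
  auto_derive; [exact I | field].
- intros x Hx. rewrite BS_ratio by (apply Hr1; lra).
  pose proof (inv_cube_bounds _ (Hr1 x ltac:(lra))). lra.
Qed.

End BryantSalamon.

Section Instanton.

Variables (r : R -> R) (t0 : R) (fp fm : R -> R).
Hypotheses (Hr : BS_radial r) (Ht0 : 0 < t0) (Hsol : instanton_solution r t0 fp fm).

Lemma instanton_region_margin : 1 < fp t0 -> 1 < fm t0 ->
  exists d, 0 < d /\ forall t, t0 <= t -> 1 + d < fp t /\ 1 < fm t.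
Proof.
intros Hfp0 Hfm0. destruct Hsol as [Hode [Hfp_right Hfm_right]].
pose proof (proj1 Hr) as Hr1.
set (q0 := (1 - / r t0 ^ 3) / 3).
assert (Hq0 : 0 < q0 < 1) by (pose proof (inv_cube_bounds _ (Hr1 t0 Ht0)); unfold q0; lra).
set (c2 := (1 + fm t0) / 2).
assert (Hc2 : 1 < c2 < fm t0) by (unfold c2; lra).
set (gap := c2 ^ 2 - 1).
assert (Hgap : 0 < gap) by (unfold gap; nra).
set (d := Rmin (Rmin ((fp t0 - 1) / 2) 1) (q0 * gap / 4)).
assert (Hd_fp : d <= (fp t0 - 1) / 2) by (unfold d; eapply Rle_trans; apply Rmin_l).
assert (Hd_1 : d <= 1) by (unfold d; eapply Rle_trans; [apply Rmin_l | apply Rmin_r]).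
assert (Hd_gap : d <= q0 * gap / 4) by (unfold d; apply Rmin_r).
assert (Hd_gap' : d <= gap / 4) by nra.
assert (Hd : 0 < d).
{ unfold d. assert (0 < q0 * gap) by nra. repeat apply Rmin_glb_lt; lra. }
exists d. split; [exact Hd|]. intros t Ht.
enough (1 + d < fp t /\ c2 < fm t) by lra.
(* On the face fp = 1 + d the numerator below is at least q0 (gap - d) - (1 + d) d,
   which is positive because d <= 1 and d <= q0 gap / 4. *)
eapply (quadrant_invariant fp fm _ _ t0 (1 + d) c2 ltac:(lra) ltac:(lra)
          Hfp_right Hfm_right Hode); [| | exact Ht].
- intros s Hs Hfp Hfm. pose proof (Hr1 s ltac:(lra)) as Hrs.
  pose proof (BS_A_pos r s Hrs) as HA. pose proof (BS_B_pos r s ltac:(lra)) as HB.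
  pose proof (BS_ratio_ge r Hr t0 s ltac:(lra)) as Hq. fold q0 in Hq.
  set (q := BS_A r s ^ 2 / BS_B r s ^ 2) in Hq.
  rewrite Hfp.
  replace ((1 + d) / BS_A r s * (1 - BS_A r s ^ 2 / BS_B r s ^ 2 - (1 + d))
           + fm s ^ 2 * (BS_A r s / BS_B r s ^ 2))
    with ((q * (fm s ^ 2 - 1 - d) - (1 + d) * d) / BS_A r s) by (unfold q; field; lra).
  apply Rdiv_lt_0_compat; [|exact HA].
  assert (Hfm2 : gap <= fm s ^ 2 - 1) by (unfold gap; apply Rplus_le_compat_r, pow_incr; lra).
  assert (q0 * (gap - d) <= q * (fm s ^ 2 - 1 - d)) by (apply Rmult_le_compat; lra).
  nra.
- intros s Hs Hfm Hfp. pose proof (BS_A_pos r s (Hr1 s ltac:(lra))). rewrite Hfm.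
  apply Rmult_lt_0_compat; [apply Rdiv_lt_0_compat|]; lra.
Qed.

Lemma instanton_fm_rhs_ge (d : R) : 0 < d ->
  (forall t, t0 <= t -> 1 + d < fp t /\ 1 < fm t) ->
  forall t, t0 < t -> 4 * d / (t - t0 + 2 * BS_A r t0) <= 2 * fm t / BS_A r t * (fp t - 1).
Proof.
intros Hd Hregion t Ht. destruct (Hregion t ltac:(lra)) as [Hfp Hfm].
pose proof (BS_A_pos r t (proj1 Hr t ltac:(lra))) as HA.
pose proof (BS_A_le_affine r Hr t0 t ltac:(lra)) as HAt.
replace (4 * d / (t - t0 + 2 * BS_A r t0)) with (2 * d / (BS_A r t0 + (t - t0) / 2))
  by (field; lra).
apply Rle_trans with (2 * d / BS_A r t).
- unfold Rdiv. apply Rmult_le_compat_l; [lra|]. apply Rinv_le_contravar; lra.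
- replace (2 * fm t / BS_A r t * (fp t - 1)) with (2 * (fm t * (fp t - 1)) / BS_A r t)
    by (field; lra).
  unfold Rdiv. apply Rmult_le_compat_r; [apply Rlt_le, Rinv_0_lt_compat; lra | nra].
Qed.

End Instanton.

Theorem mainTheorem4 (r : R -> R) (t0 : R) (fp fm : R -> R) :
  BS_radial r -> 0 < t0 ->
  instanton_solution r t0 fp fm ->
  1 < fp t0 -> 1 < fm t0 ->
  ~ (exists M : R, forall t, t0 <= t -> Rabs (fp t) <= M /\ Rabs (fm t) <= M).
Proof.
intros Hr Ht0 Hsol Hfp0 Hfm0 [M HM].
destruct (instanton_region_margin r t0 fp fm Hr Ht0 Hsol Hfp0 Hfm0) as [d [Hd Hregion]].
pose proof (BS_A_pos r t0 (proj1 Hr t0 Ht0)) as HA0.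
destruct (derive_ge_inv_affine_unbounded fm (fun t => 2 * fm t / BS_A r t * (fp t - 1))
            t0 (2 * BS_A r t0) (4 * d)) with M as [t [Ht HMt]].
- lra.
- lra.
- intros t Ht. exact (proj2 (proj1 Hsol t Ht)).
- exact (instanton_fm_rhs_ge r t0 fp fm Hr Ht0 d Hd Hregion).
- destruct (HM t ltac:(lra)) as [_ Hbound]. apply Rabs_le_between in Hbound. lra.
Qed.
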